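(* Suppose $\vdash t:A\vee B$ in the system $\mathsf{HA}+\mathsf{EM}_1^-$, where $t$ and $A\vee B$ are closed. Then there exists a term $u$ such that $\vdash u:A$ or a term $v$ such that $\vdash v:B$.
   Context: $\mathsf{HA}+\mathsf{EM}_1^-$ is the Curry–Howard proof-term system for intuitionistic (Heyting) arithmetic over the language $\mathcal{L}$ ($0,\mathsf{S},+,\cdot,=$; atomic formulas are decidable and $\mathsf{P}^\bot$ denotes the complementary atomic predicate of $\mathsf{P}$): natural deduction rules for $\wedge,\to,\vee,\forall,\exists$ with the usual proof terms, an induction rule, Post rules for atomic formulas (equality, Peano axioms, propositional tautologies between atomic formulas), hypothesis terms $\mathsf{H}_a^{\forall\alpha\mathsf{P}}:\forall\alpha\mathsf{P}$ (for $a:\forall\alpha\mathsf{P}$ in the context) and $\mathsf{W}_a^{\exists\alpha\mathsf{P}^\bot}:\exists\alpha\mathsf{P}^\bot$ (for $a:\exists\alpha\mathsf{P}^\bot$ in the context), and the rule $\mathsf{EM}_1^-$: from $\Gamma,a:\forall\alpha\mathsf{P}\vdash u:\exists\beta C$ and $\Gamma,a:\exists\alpha\mathsf{P}^\bot\vdash v:\exists\beta C$, with $\mathsf{P}$ and $C$ atomic, infer $\Gamma\vdash\mathsf{E}_a(u,v):\exists\beta C$. $\vdash t:A$ means $t$ is a proof term of $A$ in the empty context. *)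

(* Proof-term system HA + EM1^- (Curry-Howard, natural deduction).
   Individual variables are de Bruijn indices; hypothesis (proof) variables are
   named by natural numbers. *)
From Stdlib Require Import List Bool Arith.
Import ListNotations.

Inductive tm : Type :=
| tVar  : nat -> tm
| tZero : tm
| tSucc : tm -> tm
| tPlus : tm -> tm -> tm
| tMult : tm -> tm -> tm.

(* ---------- Formulas ----------
   Atomic formulas: [fAtom true s t] is  s = t ; [fAtom false s t] is its
   complementary atomic predicate  s <> t  (P^bot).  *)
Inductive form : Type :=
| fAtom : bool -> tm -> tm -> form
| fAnd  : form -> form -> form
| fImp  : form -> form -> form
| fOr   : form -> form -> form
| fAll  : form -> form
| fEx   : form -> form.

Definition perp (P : form) : form :=
  match P with
  | fAtom b s t => fAtom (negb b) s t
  | A => A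
  end.

Definition is_atomic (P : form) : Prop :=
  match P with fAtom _ _ _ => True | _ => False end.

Fixpoint tsubst (sg : nat -> tm) (t : tm) : tm :=
  match t with
  | tVar n => sg n
  | tZero => tZero
  | tSucc t => tSucc (tsubst sg t)
  | tPlus a b => tPlus (tsubst sg a) (tsubst sg b)
  | tMult a b => tMult (tsubst sg a) (tsubst sg b)
  end.

Definition tshift (t : tm) : tm := tsubst (fun n => tVar (S n)) t.

Definition up (sg : nat -> tm) : nat -> tm :=
  fun n => match n with 0 => tVar 0 | S k => tshift (sg k) end.

Definition scons (t : tm) (sg : nat -> tm) : nat -> tm :=
  fun n => match n with 0 => t | S k => sg k end.

Fixpoint fsubst (sg : nat -> tm) (A : form) : form :=
  match A with
  | fAtom b s t => fAtom b (tsubst sg s) (tsubst sg t)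
  | fAnd A B => fAnd (fsubst sg A) (fsubst sg B)
  | fImp A B => fImp (fsubst sg A) (fsubst sg B)
  | fOr A B => fOr (fsubst sg A) (fsubst sg B)
  | fAll A => fAll (fsubst (up sg) A)
  | fEx A => fEx (fsubst (up sg) A)
  end.

Definition fshift (A : form) : form := fsubst (fun n => tVar (S n)) A.
Definition inst (A : form) (m : tm) : form := fsubst (scons m tVar) A.
(* A(S alpha) for A(alpha), alpha = index 0, same scope *)
Definition inst_succ (A : form) : form :=
  fsubst (scons (tSucc (tVar 0)) (fun n => tVar (S n))) A.

Fixpoint tm_wf (k : nat) (t : tm) : Prop :=
  match t with
  | tVar n => n < k
  | tZero => True
  | tSucc t => tm_wf k t
  | tPlus a b | tMult a b => tm_wf k a /\ tm_wf k b
  end.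

Fixpoint form_wf (k : nat) (A : form) : Prop :=
  match A with
  | fAtom _ s t => tm_wf k s /\ tm_wf k t
  | fAnd A B | fImp A B | fOr A B => form_wf k A /\ form_wf k B
  | fAll A | fEx A => form_wf (S k) A
  end.

Definition form_closed (A : form) : Prop := form_wf 0 A.

(* ---------- Post rules (atomic rules) ----------
   Valuation of atomic formulas treating each equation s = t as a
   propositional variable and s <> t as its negation. *)
Definition atom_val (v : tm -> tm -> bool) (P : form) : bool :=
  match P with
  | fAtom b s t => if b then v s t else negb (v s t)
  | _ => false
  end.

Inductive PostRule : list form -> form -> Prop :=
| post_refl : forall t, PostRule [] (fAtom true t t)
| post_leibniz : forall s t P, is_atomic P ->
    PostRule [fAtom true s t; inst P s] (inst P t)
| post_succ_zero : forall t P, is_atomic P ->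
    PostRule [fAtom true (tSucc t) tZero] P
| post_succ_inj : forall s t,
    PostRule [fAtom true (tSucc s) (tSucc t)] (fAtom true s t)
| post_plus0 : forall t, PostRule [] (fAtom true (tPlus t tZero) t)
| post_plusS : forall s t,
    PostRule [] (fAtom true (tPlus s (tSucc t)) (tSucc (tPlus s t)))
| post_mult0 : forall t, PostRule [] (fAtom true (tMult t tZero) tZero)
| post_multS : forall s t,
    PostRule [] (fAtom true (tMult s (tSucc t)) (tPlus (tMult s t) s))
| post_taut : forall Ps C,
    Forall is_atomic Ps -> is_atomic C ->
    (forall v : tm -> tm -> bool,
        Forall (fun P => atom_val v P = true) Ps -> atom_val v C = true) ->
    PostRule Ps C.

Inductive pt : Type :=
| pHyp  : nat -> pt
| pPair : pt -> pt -> pt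
| pFst  : pt -> pt
| pSnd  : pt -> pt
| pLam  : nat -> pt -> pt
| pApp  : pt -> pt -> pt
| pInl  : pt -> pt
| pInr  : pt -> pt
| pCase : pt -> nat -> pt -> nat -> pt -> pt
| pLamI : pt -> pt
| pAppI : pt -> tm -> pt
| pExI  : tm -> pt -> pt
| pExE  : pt -> nat -> pt -> pt
| pRec  : pt -> pt -> tm -> pt
| pPost : list pt -> pt
| pH    : nat -> form -> pt
| pW    : nat -> form -> pt
| pEM   : nat -> pt -> pt -> pt.

Fixpoint pt_wf (k : nat) (u : pt) : Prop :=
  match u with
  | pHyp _ => True
  | pPair u v | pApp u v => pt_wf k u /\ pt_wf k v
  | pFst u | pSnd u | pLam _ u | pInl u | pInr u => pt_wf k u
  | pCase u _ v _ w => pt_wf k u /\ pt_wf k v /\ pt_wf k w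
  | pLamI u => pt_wf (S k) u
  | pAppI u m => pt_wf k u /\ tm_wf k m
  | pExI m u => tm_wf k m /\ pt_wf k u
  | pExE u _ v => pt_wf k u /\ pt_wf (S k) v
  | pRec u v m => pt_wf k u /\ pt_wf k v /\ tm_wf k m
  | pPost us =>
      (fix wfl (l : list pt) : Prop :=
         match l with [] => True | u :: l' => pt_wf k u /\ wfl l' end) us
  | pH _ A | pW _ A => form_wf k A
  | pEM _ u v => pt_wf k u /\ pt_wf k v
  end.

(* closed proof term: no free individual variables (free hypothesis
   variables are excluded anyway by typing in the empty context) *)
Definition pt_closed (u : pt) : Prop := pt_wf 0 u.

Definition ctx := list (nat * form).

Fixpoint lookup (a : nat) (G : ctx) : option form :=
  match G with
  | [] => None
  | (b, A) :: G' => if Nat.eqb a b then Some A else lookup a G'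
  end.

Definition ctx_shift (G : ctx) : ctx := map (fun p => (fst p, fshift (snd p))) G.

Inductive typed : ctx -> pt -> form -> Prop :=
| ty_hyp : forall G x A, lookup x G = Some A -> typed G (pHyp x) A
| ty_pair : forall G u v A B, typed G u A -> typed G v B ->
    typed G (pPair u v) (fAnd A B)
| ty_fst : forall G u A B, typed G u (fAnd A B) -> typed G (pFst u) A
| ty_snd : forall G u A B, typed G u (fAnd A B) -> typed G (pSnd u) B
| ty_lam : forall G x u A B, typed ((x, A) :: G) u B ->
    typed G (pLam x u) (fImp A B)
| ty_app : forall G u v A B, typed G u (fImp A B) -> typed G v A ->
    typed G (pApp u v) B
| ty_inl : forall G u A B, typed G u A -> typed G (pInl u) (fOr A B)
| ty_inr : forall G u A B, typed G u B -> typed G (pInr u) (fOr A B)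
| ty_case : forall G u x v y w A B C, typed G u (fOr A B) ->
    typed ((x, A) :: G) v C -> typed ((y, B) :: G) w C ->
    typed G (pCase u x v y w) C
| ty_lamI : forall G u A, typed (ctx_shift G) u A ->
    typed G (pLamI u) (fAll A)
| ty_appI : forall G u m A, typed G u (fAll A) ->
    typed G (pAppI u m) (inst A m)
| ty_exI : forall G m u A, typed G u (inst A m) ->
    typed G (pExI m u) (fEx A)
| ty_exE : forall G u x v A C, typed G u (fEx A) ->
    typed ((x, A) :: ctx_shift G) v (fshift C) ->
    typed G (pExE u x v) C
| ty_rec : forall G u v m A, typed G u (inst A tZero) ->
    typed G v (fAll (fImp A (inst_succ A))) ->
    typed G (pRec u v m) (inst A m)
| ty_post : forall G us Ps C, PostRule Ps C ->
    Forall2 (typed G) us Ps -> typed G (pPost us) C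
| ty_H : forall G a P, is_atomic P -> lookup a G = Some (fAll P) ->
    typed G (pH a (fAll P)) (fAll P)
| ty_W : forall G a P, is_atomic P -> lookup a G = Some (fEx (perp P)) ->
    typed G (pW a (fEx (perp P))) (fEx (perp P))
| ty_EM : forall G a u v P C, is_atomic P -> is_atomic C ->
    typed ((a, fAll P) :: G) u (fEx C) ->
    typed ((a, fEx (perp P)) :: G) v (fEx C) ->
    typed G (pEM a u v) (fEx C).

(* Aczel's slash relativised to truth.  For an environment [e] of the
   individual variables, [slash e A] holds when [A] is true under [e] and every
   disjunction and existential in it is witnessed by a closed proof of the
   chosen disjunct or instance, implications being required to carry the slash
   only from premises that are also provable.  Every derivable formula is
   slashed, by induction on derivations; for a closed disjunction this says one
   of the disjuncts is provable.  The rule EM1^- is harmless because its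
   conclusion [exists beta C], with [C] atomic, is true by classical soundness,
   and a true closed atom is provable: equations by computation with the Post
   rules, inequations by an instance of EM1^- itself.  In the induction rule
   the numeral reached by induction must be traded for an arbitrary closed term
   of the same value, which needs that instances of a formula at provably equal
   terms are interprovable. *)

From Stdlib Require Import List Bool Arith Lia Classical FunctionalExtensionality.
Import ListNotations.

(** * Substitution *)

Lemma tsubst_comp s1 s2 t :
  tsubst s2 (tsubst s1 t) = tsubst (fun n => tsubst s2 (s1 n)) t.
Proof. induction t; simpl; f_equal; auto. Qed.

Lemma tsubst_var t : tsubst tVar t = t.
Proof. induction t; simpl; f_equal; auto. Qed.

Lemma tsubst_scons_tshift m s t : tsubst (scons m s) (tshift t) = tsubst s t.
Proof. unfold tshift; rewrite tsubst_comp; reflexivity. Qed.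

Lemma tsubst_scons_tshift_var m t : tsubst (scons m tVar) (tshift t) = t.
Proof. rewrite tsubst_scons_tshift; apply tsubst_var. Qed.

Lemma up_comp s1 s2 :
  (fun n => tsubst (up s2) (up s1 n)) = up (fun n => tsubst s2 (s1 n)).
Proof.
  extensionality n; destruct n as [|n]; [reflexivity|].
  unfold up, tshift; rewrite !tsubst_comp; reflexivity.
Qed.

Lemma up_var : up tVar = tVar.
Proof. extensionality n; destruct n; reflexivity. Qed.

Lemma fsubst_comp s1 s2 A :
  fsubst s2 (fsubst s1 A) = fsubst (fun n => tsubst s2 (s1 n)) A.
Proof.
  revert s1 s2; induction A; intros; simpl;
    rewrite ?tsubst_comp, ?IHA1, ?IHA2, ?IHA, ?up_comp; reflexivity.
Qed.

Lemma fsubst_var A : fsubst tVar A = A.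
Proof. induction A; simpl; rewrite ?tsubst_var, ?up_var; congruence. Qed.

Lemma tsubst_wf k s t :
  tm_wf k t -> (forall i, i < k -> s i = tVar i) -> tsubst s t = t.
Proof. induction t; simpl; intros; f_equal; intuition. Qed.

Lemma fsubst_wf k s A :
  form_wf k A -> (forall i, i < k -> s i = tVar i) -> fsubst s A = A.
Proof.
  revert k s; induction A; simpl; intros k s HA Hs; f_equal;
    intuition eauto using tsubst_wf;
    apply (IHA (S k)); auto; intros [|i] Hi; simpl; rewrite ?Hs by lia; reflexivity.
Qed.

Lemma fsubst_closed s A : form_closed A -> fsubst s A = A.
Proof. intros HA; apply (fsubst_wf 0); [exact HA | lia]. Qed.

Lemma fsubst_up_fshift s A : fsubst (up s) (fshift A) = fshift (fsubst s A).
Proof. unfold fshift; rewrite !fsubst_comp; reflexivity. Qed.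

Lemma fsubst_inst s A m : fsubst s (inst A m) = inst (fsubst (up s) A) (tsubst s m).
Proof.
  unfold inst; rewrite !fsubst_comp; f_equal.
  extensionality n; destruct n as [|n]; simpl; [reflexivity|].
  rewrite tsubst_scons_tshift_var; reflexivity.
Qed.

Lemma fsubst_inst_succ s A : fsubst (up s) (inst_succ A) = inst_succ (fsubst (up s) A).
Proof.
  unfold inst_succ; rewrite !fsubst_comp; f_equal.
  extensionality n; destruct n as [|n]; simpl; [reflexivity|].
  rewrite tsubst_scons_tshift; reflexivity.
Qed.

Lemma inst_var0_up_shift A : inst (fsubst (up (fun n => tVar (S n))) A) (tVar 0) = A.
Proof.
  unfold inst; rewrite fsubst_comp; transitivity (fsubst tVar A); [|apply fsubst_var].
  f_equal; extensionality n; destruct n; reflexivity.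
Qed.

Lemma perp_fsubst s P : perp (fsubst s P) = fsubst s (perp P).
Proof. destruct P; reflexivity. Qed.

Lemma is_atomic_fsubst s P : is_atomic P -> is_atomic (fsubst s P).
Proof. destruct P; simpl; auto. Qed.

(** * Structural properties of derivations *)

(* [typed] is nested through [Forall2] in the Post rule, so its generated
   induction principle gives no hypothesis for the premises of a Post rule. *)
Lemma typed_nested_ind (P : ctx -> pt -> form -> Prop)
  (Hhyp : forall G x A, lookup x G = Some A -> P G (pHyp x) A)
  (Hpair : forall G u v A B, typed G u A -> P G u A -> typed G v B -> P G v B ->
      P G (pPair u v) (fAnd A B))
  (Hfst : forall G u A B, typed G u (fAnd A B) -> P G u (fAnd A B) -> P G (pFst u) A)
  (Hsnd : forall G u A B, typed G u (fAnd A B) -> P G u (fAnd A B) -> P G (pSnd u) B)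
  (Hlam : forall G x u A B, typed ((x, A) :: G) u B -> P ((x, A) :: G) u B ->
      P G (pLam x u) (fImp A B))
  (Happ : forall G u v A B, typed G u (fImp A B) -> P G u (fImp A B) ->
      typed G v A -> P G v A -> P G (pApp u v) B)
  (Hinl : forall G u A B, typed G u A -> P G u A -> P G (pInl u) (fOr A B))
  (Hinr : forall G u A B, typed G u B -> P G u B -> P G (pInr u) (fOr A B))
  (Hcase : forall G u x v y w A B C, typed G u (fOr A B) -> P G u (fOr A B) ->
      typed ((x, A) :: G) v C -> P ((x, A) :: G) v C ->
      typed ((y, B) :: G) w C -> P ((y, B) :: G) w C ->
      P G (pCase u x v y w) C)
  (HlamI : forall G u A, typed (ctx_shift G) u A -> P (ctx_shift G) u A ->
      P G (pLamI u) (fAll A))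
  (HappI : forall G u m A, typed G u (fAll A) -> P G u (fAll A) ->
      P G (pAppI u m) (inst A m))
  (HexI : forall G m u A, typed G u (inst A m) -> P G u (inst A m) ->
      P G (pExI m u) (fEx A))
  (HexE : forall G u x v A C, typed G u (fEx A) -> P G u (fEx A) ->
      typed ((x, A) :: ctx_shift G) v (fshift C) ->
      P ((x, A) :: ctx_shift G) v (fshift C) ->
      P G (pExE u x v) C)
  (Hrec : forall G u v m A, typed G u (inst A tZero) -> P G u (inst A tZero) ->
      typed G v (fAll (fImp A (inst_succ A))) -> P G v (fAll (fImp A (inst_succ A))) ->
      P G (pRec u v m) (inst A m))
  (Hpost : forall G us Ps C, PostRule Ps C -> Forall2 (typed G) us Ps ->
      Forall2 (P G) us Ps -> P G (pPost us) C)
  (HH : forall G a Q, is_atomic Q -> lookup a G = Some (fAll Q) ->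
      P G (pH a (fAll Q)) (fAll Q))
  (HW : forall G a Q, is_atomic Q -> lookup a G = Some (fEx (perp Q)) ->
      P G (pW a (fEx (perp Q))) (fEx (perp Q)))
  (HEM : forall G a u v Q C, is_atomic Q -> is_atomic C ->
      typed ((a, fAll Q) :: G) u (fEx C) -> P ((a, fAll Q) :: G) u (fEx C) ->
      typed ((a, fEx (perp Q)) :: G) v (fEx C) -> P ((a, fEx (perp Q)) :: G) v (fEx C) ->
      P G (pEM a u v) (fEx C)) :
  forall G t A, typed G t A -> P G t A.
Proof.
  fix IH 4; intros G t A Ht; destruct Ht; eauto.
  apply Hpost with Ps; auto.
  clear H; induction H0; constructor; auto.
Qed.

Definition provable (G : ctx) (A : form) : Prop := exists u, typed G u A.

Lemma provable_post G Ps C : PostRule Ps C -> Forall (provable G) Ps -> provable G C.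
Proof.
  intros HC HPs; assert (Hus : exists us, Forall2 (typed G) us Ps).
  { clear HC; induction HPs as [|P Ps' [u Hu] _ [us Hus]]; [exists [] | exists (u :: us)];
      auto. }
  destruct Hus as [us Hus]; exists (pPost us); eapply ty_post; eassumption.
Qed.

Definition ctx_incl (G G' : ctx) : Prop :=
  forall x B, lookup x G = Some B -> lookup x G' = Some B.

Lemma lookup_ctx_shift G x : lookup x (ctx_shift G) = option_map fshift (lookup x G).
Proof. induction G as [|[b B] G IH]; simpl; [|destruct (Nat.eqb x b)]; auto. Qed.

Lemma ctx_incl_cons G G' x A : ctx_incl G G' -> ctx_incl ((x, A) :: G) ((x, A) :: G').
Proof. intros H y B; simpl; destruct (Nat.eqb y x); auto. Qed.

Lemma ctx_incl_shift G G' : ctx_incl G G' -> ctx_incl (ctx_shift G) (ctx_shift G').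
Proof.
  intros H x B; rewrite !lookup_ctx_shift.
  destruct (lookup x G) eqn:E; simpl; [rewrite (H _ _ E); auto | discriminate].
Qed.

Lemma typed_weaken : forall G t A, typed G t A -> forall G', ctx_incl G G' -> typed G' t A.
Proof.
  apply (typed_nested_ind (fun G t A => forall G', ctx_incl G G' -> typed G' t A));
    try (intros; econstructor; eauto using ctx_incl_cons, ctx_incl_shift; fail).
  - intros G us Ps C HPs _ IH G' HG; apply (ty_post _ _ _ _ HPs).
    clear HPs; induction IH; constructor; auto.
  - intros G a u v Q C HQ HC _ IHu _ IHv G' HG.
    apply (ty_EM _ _ _ _ Q); auto using ctx_incl_cons.
Qed.

Lemma typed_weaken_nil G t A : typed [] t A -> typed G t A.
Proof. intros Ht; apply (typed_weaken _ _ _ Ht); discriminate. Qed.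

Lemma provable_weaken_nil G A : provable [] A -> provable G A.
Proof. intros [u Hu]; exists u; apply typed_weaken_nil, Hu. Qed.

Definition map_ctx (s : nat -> tm) (G : ctx) : ctx :=
  map (fun p => (fst p, fsubst s (snd p))) G.

Lemma lookup_map_ctx s G x : lookup x (map_ctx s G) = option_map (fsubst s) (lookup x G).
Proof. induction G as [|[b B] G IH]; simpl; [|destruct (Nat.eqb x b)]; auto. Qed.

Lemma map_ctx_shift s G : map_ctx (up s) (ctx_shift G) = ctx_shift (map_ctx s G).
Proof.
  induction G as [|[b B] G IH]; simpl; [|rewrite IH, fsubst_up_fshift]; reflexivity.
Qed.

Lemma PostRule_fsubst s Ps C : PostRule Ps C -> PostRule (map (fsubst s) Ps) (fsubst s C).
Proof.
  destruct 1 as [| |P ? HP| | | | | |Ps C HPs HC Htaut]; simpl; rewrite ?fsubst_inst;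
    constructor; auto using is_atomic_fsubst.
  - rewrite Forall_map; eapply Forall_impl; [|eassumption]; auto using is_atomic_fsubst.
  - intros v Hv.
    assert (Hval : forall P, is_atomic P ->
      atom_val v (fsubst s P) = atom_val (fun a b => v (tsubst s a) (tsubst s b)) P)
      by (destruct P; simpl; tauto).
    rewrite Hval by assumption; apply Htaut.
    rewrite Forall_map, Forall_forall in Hv; rewrite Forall_forall in HPs |- *.
    intros P HP; rewrite <- Hval by auto; auto.
Qed.

Lemma typed_fsubst : forall G t A, typed G t A ->
  forall s, provable (map_ctx s G) (fsubst s A).
Proof.
  apply (typed_nested_ind (fun G t A => forall s, provable (map_ctx s G) (fsubst s A)));
    simpl.
  - intros G x A Hx s; exists (pHyp x); apply ty_hyp; rewrite lookup_map_ctx, Hx; reflexivity.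
  - intros G u v A B _ IHu _ IHv s; destruct (IHu s), (IHv s).
    eexists; apply ty_pair; eassumption.
  - intros G u A B _ IHu s; destruct (IHu s); eexists; eapply ty_fst; eassumption.
  - intros G u A B _ IHu s; destruct (IHu s); eexists; eapply ty_snd; eassumption.
  - intros G x u A B _ IHu s; destruct (IHu s); eexists; apply ty_lam; eassumption.
  - intros G u v A B _ IHu _ IHv s; destruct (IHu s), (IHv s).
    eexists; eapply ty_app; eassumption.
  - intros G u A B _ IHu s; destruct (IHu s); eexists; apply ty_inl; eassumption.
  - intros G u A B _ IHu s; destruct (IHu s); eexists; apply ty_inr; eassumption.
  - intros G u x v y w A B C _ IHu _ IHv _ IHw s; destruct (IHu s), (IHv s), (IHw s).
    eexists; eapply ty_case; eassumption.
  - intros G u A _ IHu s; destruct (IHu (up s)) as [u' Hu'].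
    rewrite map_ctx_shift in Hu'; eexists; apply ty_lamI; exact Hu'.
  - intros G u m A _ IHu s; destruct (IHu s).
    rewrite fsubst_inst; eexists; apply ty_appI; eassumption.
  - intros G m u A _ IHu s; destruct (IHu s) as [u' Hu'].
    rewrite fsubst_inst in Hu'; eexists; eapply ty_exI; exact Hu'.
  - intros G u x v A C _ IHu _ IHv s; destruct (IHu s), (IHv (up s)) as [v' Hv'].
    simpl in Hv'; rewrite map_ctx_shift, fsubst_up_fshift in Hv'.
    eexists; eapply ty_exE; eassumption.
  - intros G u v m A _ IHu _ IHv s; destruct (IHu s) as [u' Hu'], (IHv s) as [v' Hv'].
    simpl in Hv'; rewrite fsubst_inst in *; rewrite fsubst_inst_succ in Hv'.
    eexists; eapply ty_rec; eassumption.
  - intros G us Ps C HPs _ IH s; apply (provable_post _ _ _ (PostRule_fsubst s _ _ HPs)).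
    clear HPs; induction IH; simpl; auto.
  - intros G a Q HQ Ha s; eexists; apply ty_H; auto using is_atomic_fsubst.
    rewrite lookup_map_ctx, Ha; reflexivity.
  - intros G a Q HQ Ha s; rewrite <- perp_fsubst; eexists; apply ty_W;
      auto using is_atomic_fsubst.
    rewrite lookup_map_ctx, Ha; simpl; rewrite perp_fsubst; reflexivity.
  - intros G a u v Q C HQ HC _ IHu _ IHv s.
    destruct (IHu s) as [u' Hu'], (IHv s) as [v' Hv']; simpl in Hu', Hv'.
    rewrite <- perp_fsubst in Hv'.
    exists (pEM a u' v'); apply (ty_EM _ _ _ _ (fsubst (up s) Q)); auto using is_atomic_fsubst.
Qed.

Lemma provable_fshift_nil A : provable [] A -> provable [] (fshift A).
Proof. intros [u Hu]; exact (typed_fsubst _ _ _ Hu _). Qed.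

Definition ctx_available (G D : ctx) : Prop :=
  forall x B, lookup x G = Some B -> lookup x D = Some B \/ provable [] B.

Lemma ctx_available_cons G D x A :
  ctx_available G D -> ctx_available ((x, A) :: G) ((x, A) :: D).
Proof. intros H y B; simpl; destruct (Nat.eqb y x); auto. Qed.

Lemma ctx_available_shift G D :
  ctx_available G D -> ctx_available (ctx_shift G) (ctx_shift D).
Proof.
  intros H x B; rewrite !lookup_ctx_shift.
  destruct (lookup x G) eqn:E; simpl; [|discriminate]; intros [= <-].
  destruct (H _ _ E) as [-> | Hf]; [left | right; apply provable_fshift_nil]; auto.
Qed.

Lemma typed_cut : forall G t A, typed G t A ->
  forall D, ctx_available G D -> provable D A.
Proof.
  apply (typed_nested_ind (fun G t A => forall D, ctx_available G D -> provable D A)).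
  - intros G x A Hx D HD; destruct (HD _ _ Hx) as [Hx' | [u Hu]];
      eexists; [apply ty_hyp | apply typed_weaken_nil]; eassumption.
  - intros G u v A B _ IHu _ IHv D HD; destruct (IHu D), (IHv D); auto.
    eexists; apply ty_pair; eassumption.
  - intros G u A B _ IHu D HD; destruct (IHu D); auto; eexists; eapply ty_fst; eassumption.
  - intros G u A B _ IHu D HD; destruct (IHu D); auto; eexists; eapply ty_snd; eassumption.
  - intros G x u A B _ IHu D HD; destruct (IHu ((x, A) :: D)); auto using ctx_available_cons.
    eexists; apply ty_lam; eassumption.
  - intros G u v A B _ IHu _ IHv D HD; destruct (IHu D), (IHv D); auto.
    eexists; eapply ty_app; eassumption.
  - intros G u A B _ IHu D HD; destruct (IHu D); auto; eexists; apply ty_inl; eassumption.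
  - intros G u A B _ IHu D HD; destruct (IHu D); auto; eexists; apply ty_inr; eassumption.
  - intros G u x v y w A B C _ IHu _ IHv _ IHw D HD.
    destruct (IHu D), (IHv ((x, A) :: D)), (IHw ((y, B) :: D)); auto using ctx_available_cons.
    eexists; eapply ty_case; eassumption.
  - intros G u A _ IHu D HD; destruct (IHu (ctx_shift D)); auto using ctx_available_shift.
    eexists; apply ty_lamI; eassumption.
  - intros G u m A _ IHu D HD; destruct (IHu D); auto; eexists; apply ty_appI; eassumption.
  - intros G m u A _ IHu D HD; destruct (IHu D); auto; eexists; eapply ty_exI; eassumption.
  - intros G u x v A C _ IHu _ IHv D HD.
    destruct (IHu D), (IHv ((x, A) :: ctx_shift D));
      auto using ctx_available_cons, ctx_available_shift.
    eexists; eapply ty_exE; eassumption.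
  - intros G u v m A _ IHu _ IHv D HD; destruct (IHu D), (IHv D); auto.
    eexists; eapply ty_rec; eassumption.
  - intros G us Ps C HPs _ IH D HD; apply (provable_post _ _ _ HPs).
    clear HPs; induction IH; auto.
  - intros G a Q HQ Ha D HD; destruct (HD _ _ Ha) as [Ha' | [u Hu]];
      eexists; [apply ty_H | apply typed_weaken_nil]; eassumption.
  - intros G a Q HQ Ha D HD; destruct (HD _ _ Ha) as [Ha' | [u Hu]];
      eexists; [apply ty_W | apply typed_weaken_nil]; eassumption.
  - intros G a u v Q C HQ HC _ IHu _ IHv D HD.
    destruct (IHu ((a, fAll Q) :: D)) as [u' Hu']; auto using ctx_available_cons.
    destruct (IHv ((a, fEx (perp Q)) :: D)) as [v' Hv']; auto using ctx_available_cons.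
    exists (pEM a u' v'); apply (ty_EM _ _ _ _ Q); assumption.
Qed.

Lemma provable_closed_instance G t A s : typed G t A ->
  (forall x B, lookup x G = Some B -> provable [] (fsubst s B)) ->
  provable [] (fsubst s A).
Proof.
  intros Ht Hctx; destruct (typed_fsubst _ _ _ Ht s) as [u Hu].
  apply (typed_cut _ _ _ Hu); intros x B Hx; right.
  rewrite lookup_map_ctx in Hx; destruct (lookup x G) eqn:E; [|discriminate].
  injection Hx as <-; eauto.
Qed.

(** * Standard semantics *)

Fixpoint teval (e : nat -> nat) (t : tm) : nat :=
  match t with
  | tVar n => e n
  | tZero => 0
  | tSucc t => S (teval e t)
  | tPlus a b => teval e a + teval e b
  | tMult a b => teval e a * teval e b
  end.

Definition ncons (n : nat) (e : nat -> nat) : nat -> nat :=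
  fun k => match k with 0 => n | S k => e k end.

Fixpoint feval (e : nat -> nat) (A : form) : Prop :=
  match A with
  | fAtom b s t => if b then teval e s = teval e t else teval e s <> teval e t
  | fAnd A B => feval e A /\ feval e B
  | fImp A B => feval e A -> feval e B
  | fOr A B => feval e A \/ feval e B
  | fAll A => forall n, feval (ncons n e) A
  | fEx A => exists n, feval (ncons n e) A
  end.

Lemma teval_tsubst e s t : teval e (tsubst s t) = teval (fun i => teval e (s i)) t.
Proof. induction t; simpl; auto. Qed.

Lemma teval_up e s n :
  (fun i => teval (ncons n e) (up s i)) = ncons n (fun i => teval e (s i)).
Proof.
  extensionality i; destruct i as [|i]; [reflexivity|].
  simpl; unfold tshift; rewrite teval_tsubst; reflexivity.
Qed.

Lemma teval_scons e m : (fun i => teval e (scons m tVar i)) = ncons (teval e m) e.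
Proof. extensionality i; destruct i; reflexivity. Qed.

Lemma teval_scons_succ e n :
  (fun i => teval (ncons n e) (scons (tSucc (tVar 0)) (fun k => tVar (S k)) i))
  = ncons (S n) e.
Proof. extensionality i; destruct i; reflexivity. Qed.

Lemma feval_fsubst e s A : feval e (fsubst s A) <-> feval (fun i => teval e (s i)) A.
Proof.
  revert e s; induction A; intros e s; simpl;
    rewrite ?teval_tsubst, ?IHA1, ?IHA2; try reflexivity;
    setoid_rewrite IHA; setoid_rewrite teval_up; reflexivity.
Qed.

Lemma feval_inst e A m : feval e (inst A m) <-> feval (ncons (teval e m) e) A.
Proof. unfold inst; rewrite feval_fsubst, teval_scons; reflexivity. Qed.

Lemma feval_inst_succ e n A : feval (ncons n e) (inst_succ A) <-> feval (ncons (S n) e) A.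
Proof. unfold inst_succ; rewrite feval_fsubst, teval_scons_succ; reflexivity. Qed.

Lemma feval_fshift e n A : feval (ncons n e) (fshift A) <-> feval e A.
Proof. unfold fshift; rewrite feval_fsubst; reflexivity. Qed.

Lemma atom_val_teval e P : is_atomic P ->
  atom_val (fun a b => Nat.eqb (teval e a) (teval e b)) P = true <-> feval e P.
Proof.
  destruct P as [[] s t | | | | |]; simpl; try contradiction; intros _.
  - apply Nat.eqb_eq.
  - rewrite negb_true_iff, Nat.eqb_neq; reflexivity.
Qed.

Lemma PostRule_sound e Ps C : PostRule Ps C -> Forall (feval e) Ps -> feval e C.
Proof.
  destruct 1 as [|s t P HP|t P HP| | | | | |Ps C HPs HC Htaut]; intros Hprem;
    repeat match goal with H : Forall _ (_ :: _) |- _ => inversion_clear H end;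
    simpl in *; rewrite ?feval_inst in *; try lia.
  - congruence.
  - apply atom_val_teval; auto; apply Htaut.
    rewrite Forall_forall in *; intros P HP; apply atom_val_teval; auto.
Qed.

Lemma feval_perp e P : is_atomic P -> feval e (perp P) <-> ~ feval e P.
Proof. destruct P as [[] | | | | |]; simpl; try contradiction; lia. Qed.

Definition ctx_true (G : ctx) (e : nat -> nat) : Prop :=
  forall x B, lookup x G = Some B -> feval e B.

Lemma ctx_true_cons G e x A : ctx_true G e -> feval e A -> ctx_true ((x, A) :: G) e.
Proof. intros HG HA y B; simpl; destruct (Nat.eqb y x); [intros [= <-] | apply HG]; auto. Qed.

Lemma ctx_true_shift G e n : ctx_true G e -> ctx_true (ctx_shift G) (ncons n e).
Proof.
  intros HG x B; rewrite lookup_ctx_shift.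
  destruct (lookup x G) eqn:E; simpl; [|discriminate]; intros [= <-].
  rewrite feval_fshift; eauto.
Qed.

Lemma typed_sound : forall G t A, typed G t A -> forall e, ctx_true G e -> feval e A.
Proof.
  apply (typed_nested_ind (fun G t A => forall e, ctx_true G e -> feval e A));
    try (intros; simpl in *; firstorder; fail).
  - intros G x u A B _ IHu e HG HA; apply IHu, ctx_true_cons; assumption.
  - intros G u x v y w A B C _ IHu _ IHv _ IHw e HG.
    destruct (IHu e HG); [apply IHv | apply IHw]; apply ctx_true_cons; assumption.
  - intros G u A _ IHu e HG n; apply IHu, ctx_true_shift, HG.
  - intros G u m A _ IHu e HG; apply feval_inst, (IHu e HG).
  - intros G m u A _ IHu e HG; exists (teval e m); apply feval_inst, (IHu e HG).
  - intros G u x v A C _ IHu _ IHv e HG.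
    destruct (IHu e HG) as [n Hn]; apply (feval_fshift e n).
    apply IHv, ctx_true_cons, Hn; apply ctx_true_shift, HG.
  - intros G u v m A _ IHu _ IHv e HG; apply feval_inst.
    generalize (teval e m); induction n as [|n IHn].
    + apply (feval_inst e A tZero); auto.
    + apply feval_inst_succ; apply (IHv e HG); assumption.
  - intros G us Ps C HPs _ IH e HG; apply (PostRule_sound e _ _ HPs).
    clear HPs; induction IH; constructor; eauto.
  - intros G a u v Q C HQ HC _ IHu _ IHv e HG.
    destruct (classic (forall n, feval (ncons n e) Q)) as [HallQ | HnotQ].
    + apply IHu; apply ctx_true_cons; auto.
    + apply IHv; apply ctx_true_cons; auto.
      apply not_all_ex_not in HnotQ as [n Hn]; exists n; apply feval_perp; auto.
Qed.

(** * Equational reasoning and numerals *)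

Fixpoint num (n : nat) : tm := match n with 0 => tZero | S n => tSucc (num n) end.

Definition nums (e : nat -> nat) : nat -> tm := fun k => num (e k).

Lemma tsubst_num s n : tsubst s (num n) = num n.
Proof. induction n; simpl; congruence. Qed.

Lemma teval_num e n : teval e (num n) = n.
Proof. induction n; simpl; congruence. Qed.

Lemma provable_refl G t : provable G (fAtom true t t).
Proof. apply (provable_post _ _ _ (post_refl t)); auto. Qed.

Lemma provable_leibniz G P s t : is_atomic P ->
  provable G (fAtom true s t) -> provable G (inst P s) -> provable G (inst P t).
Proof.
  intros HP Hst Hs; apply (provable_post _ _ _ (post_leibniz s t P HP)); auto.
Qed.

Lemma provable_rewrite_l G b x x' y :
  provable G (fAtom true x x') -> provable G (fAtom b x y) -> provable G (fAtom b x' y).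
Proof.
  intros Hx Hxy; generalize (provable_leibniz G (fAtom b (tVar 0) (tshift y)) x x' I Hx).
  unfold inst; simpl; rewrite !tsubst_scons_tshift_var; auto.
Qed.

Lemma provable_rewrite_r G b x y y' :
  provable G (fAtom true y y') -> provable G (fAtom b x y) -> provable G (fAtom b x y').
Proof.
  intros Hy Hxy; generalize (provable_leibniz G (fAtom b (tshift x) (tVar 0)) y y' I Hy).
  unfold inst; simpl; rewrite !tsubst_scons_tshift_var; auto.
Qed.

Lemma provable_sym G s t : provable G (fAtom true s t) -> provable G (fAtom true t s).
Proof. intros Hst; apply (provable_rewrite_l _ _ s); auto using provable_refl. Qed.

Lemma provable_trans G s t u :
  provable G (fAtom true s t) -> provable G (fAtom true t u) -> provable G (fAtom true s u).
Proof. intros Hst Htu; apply (provable_rewrite_r _ _ _ t); auto. Qed.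

Lemma provable_congr G a b c : provable G (fAtom true a b) ->
  provable G (fAtom true (tsubst (scons a tVar) c) (tsubst (scons b tVar) c)).
Proof.
  intros Hab.
  generalize (provable_leibniz G (fAtom true (tshift (tsubst (scons a tVar) c)) c) a b I Hab).
  unfold inst; simpl; rewrite !tsubst_scons_tshift_var; intros H; apply H, provable_refl.
Qed.

Lemma provable_succ_congr G a b :
  provable G (fAtom true a b) -> provable G (fAtom true (tSucc a) (tSucc b)).
Proof. apply (provable_congr G a b (tSucc (tVar 0))). Qed.

Lemma provable_plus_congr G a b c d : provable G (fAtom true a b) ->
  provable G (fAtom true c d) -> provable G (fAtom true (tPlus a c) (tPlus b d)).
Proof.
  intros Hab Hcd; apply (provable_trans _ _ (tPlus b c)).
  - generalize (provable_congr G a b (tPlus (tVar 0) (tshift c)) Hab).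
    simpl; rewrite !tsubst_scons_tshift_var; auto.
  - generalize (provable_congr G c d (tPlus (tshift b) (tVar 0)) Hcd).
    simpl; rewrite !tsubst_scons_tshift_var; auto.
Qed.

Lemma provable_mult_congr G a b c d : provable G (fAtom true a b) ->
  provable G (fAtom true c d) -> provable G (fAtom true (tMult a c) (tMult b d)).
Proof.
  intros Hab Hcd; apply (provable_trans _ _ (tMult b c)).
  - generalize (provable_congr G a b (tMult (tVar 0) (tshift c)) Hab).
    simpl; rewrite !tsubst_scons_tshift_var; auto.
  - generalize (provable_congr G c d (tMult (tshift b) (tVar 0)) Hcd).
    simpl; rewrite !tsubst_scons_tshift_var; auto.
Qed.

Lemma provable_num_plus G x y :
  provable G (fAtom true (tPlus (num x) (num y)) (num (x + y))).
Proof.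
  induction y as [|y IHy].
  - rewrite Nat.add_0_r; apply (provable_post _ _ _ (post_plus0 _)); auto.
  - rewrite Nat.add_succ_r; apply (provable_trans _ _ (tSucc (tPlus (num x) (num y)))).
    + apply (provable_post _ _ _ (post_plusS _ _)); auto.
    + apply provable_succ_congr, IHy.
Qed.

Lemma provable_num_mult G x y :
  provable G (fAtom true (tMult (num x) (num y)) (num (x * y))).
Proof.
  induction y as [|y IHy].
  - rewrite Nat.mul_0_r; apply (provable_post _ _ _ (post_mult0 _)); auto.
  - rewrite Nat.mul_succ_r; apply (provable_trans _ _ (tPlus (tMult (num x) (num y)) (num x))).
    + apply (provable_post _ _ _ (post_multS _ _)); auto.
    + apply (provable_trans _ _ (tPlus (num (x * y)) (num x))); [|apply provable_num_plus].
      apply provable_plus_congr; auto using provable_refl.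
Qed.

Lemma provable_nums_teval G e t :
  provable G (fAtom true (tsubst (nums e) t) (num (teval e t))).
Proof.
  induction t; simpl.
  - apply provable_refl.
  - apply provable_refl.
  - apply provable_succ_congr; assumption.
  - eapply provable_trans; [apply provable_plus_congr; eassumption | apply provable_num_plus].
  - eapply provable_trans; [apply provable_mult_congr; eassumption | apply provable_num_mult].
Qed.

Lemma provable_num_explode G a b Q : a <> b -> is_atomic Q ->
  provable G (fAtom true (num a) (num b)) -> provable G Q.
Proof.
  revert b; induction a as [|a IHa]; intros [|b] Hab HQ Heq; try congruence.
  - apply (provable_post _ _ _ (post_succ_zero (num b) _ HQ)); auto using provable_sym.
  - apply (provable_post _ _ _ (post_succ_zero (num a) _ HQ)); auto.
  - apply (IHa b), (provable_post _ _ _ (post_succ_inj _ _)); auto.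
Qed.

(* Without hypotheses the Post rules reach no inequation; a false equation
   can only explode.  EM1^- on [P := num a = num b] supplies the step: under
   [forall alpha P] the false equation explodes into [num a <> num b], and the
   hypothesis [exists alpha P^bot] is already an instance of it. *)
Lemma provable_num_neq a b : a <> b -> provable [] (fAtom false (num a) (num b)).
Proof.
  intros Hab; set (P := fAtom true (num a) (num b)); set (C := fAtom false (num a) (num b)).
  assert (HPC : forall s, fsubst s P = P /\ fsubst s C = C)
    by (intros s; simpl; rewrite !tsubst_num; auto).
  assert (Hu : provable [(0, fAll P)] (fEx C)).
  { assert (HP : typed [(0, fAll P)] (pAppI (pHyp 0) tZero) (inst P tZero))
      by (apply ty_appI, ty_hyp; reflexivity).
    unfold inst in HP; rewrite (proj1 (HPC _)) in HP.
    destruct (provable_num_explode _ a b C Hab I (ex_intro _ _ HP)) as [w Hw].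
    exists (pExI tZero w); apply ty_exI; unfold inst; rewrite (proj2 (HPC _)); exact Hw. }
  destruct Hu as [u Hu].
  assert (Hv : typed [(0, fEx (perp P))] (pHyp 0) (fEx C)) by (apply ty_hyp; reflexivity).
  exists (pExE (pEM 0 u (pHyp 0)) 1 (pHyp 1)).
  apply (ty_exE _ _ _ _ C); [apply (ty_EM _ _ _ _ P); simpl; auto|].
  unfold fshift; rewrite (proj2 (HPC _)); apply ty_hyp; reflexivity.
Qed.

Lemma provable_true_atom e b s t :
  feval e (fAtom b s t) -> provable [] (fsubst (nums e) (fAtom b s t)).
Proof.
  intros Htrue; simpl.
  apply (provable_rewrite_l _ _ (num (teval e s))), (provable_rewrite_r _ _ _ (num (teval e t)));
    try (apply provable_sym, provable_nums_teval).
  destruct b; simpl in Htrue; [rewrite Htrue; apply provable_refl | apply provable_num_neq, Htrue].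
Qed.

(** * Transport along provably equal substitutions *)

Definition provably_equal (s1 s2 : nat -> tm) : Prop :=
  forall i, provable [] (fAtom true (s1 i) (s2 i)).

Lemma provably_equal_sym s1 s2 : provably_equal s1 s2 -> provably_equal s2 s1.
Proof. intros Hs i; apply provable_sym, Hs. Qed.

Lemma provably_equal_up s1 s2 : provably_equal s1 s2 -> provably_equal (up s1) (up s2).
Proof.
  intros Hs [|i]; [apply provable_refl | exact (provable_fshift_nil _ (Hs i))].
Qed.

Lemma provable_tsubst_congr G s1 s2 t : provably_equal s1 s2 ->
  provable G (fAtom true (tsubst s1 t) (tsubst s2 t)).
Proof.
  intros Hs; induction t; simpl;
    auto using provable_refl, provable_weaken_nil, provable_succ_congr,
      provable_plus_congr, provable_mult_congr.
Qed.

Definition fresh (G : ctx) : nat := S (fold_right max 0 (map fst G)).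

Lemma ctx_incl_fresh G A : ctx_incl G ((fresh G, A) :: G).
Proof.
  assert (Hnone : forall x, fold_right max 0 (map fst G) < x -> lookup x G = None).
  { induction G as [|[b B] G IH]; intros x Hx; simpl in *; [reflexivity|].
    destruct (Nat.eqb_spec x b); [lia | apply IH; lia]. }
  intros x B Hx; simpl; destruct (Nat.eqb_spec x (fresh G)) as [-> | _]; [|exact Hx].
  rewrite Hnone in Hx; [discriminate | unfold fresh; lia].
Qed.

Lemma provable_fAll_open G A : provable G (fAll A) -> provable (ctx_shift G) A.
Proof.
  intros [u Hu]; destruct (typed_fsubst _ _ _ Hu (fun n => tVar (S n))) as [u' Hu'].
  exists (pAppI u' (tVar 0)); rewrite <- (inst_var0_up_shift A); apply ty_appI, Hu'.
Qed.

Lemma provable_fsubst_transport A : forall G s1 s2, provably_equal s1 s2 ->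
  provable G (fsubst s1 A) -> provable G (fsubst s2 A).
Proof.
  induction A as [b x y|A1 IH1 A2 IH2|A1 IH1 A2 IH2|A1 IH1 A2 IH2|A IH|A IH];
    intros G s1 s2 Hs HA; simpl in *.
  - apply (provable_rewrite_l _ _ (tsubst s1 x)), (provable_rewrite_r _ _ _ (tsubst s1 y));
      auto using provable_tsubst_congr.
  - destruct HA as [u Hu].
    destruct (IH1 G s1 s2 Hs (ex_intro _ _ (ty_fst _ _ _ _ Hu))) as [u1 Hu1].
    destruct (IH2 G s1 s2 Hs (ex_intro _ _ (ty_snd _ _ _ _ Hu))) as [u2 Hu2].
    exists (pPair u1 u2); apply ty_pair; assumption.
  - destruct HA as [u Hu]; set (G' := (fresh G, fsubst s2 A1) :: G).
    assert (Hx : typed G' (pHyp (fresh G)) (fsubst s2 A1))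
      by (apply ty_hyp; simpl; rewrite Nat.eqb_refl; reflexivity).
    destruct (IH1 G' s2 s1 (provably_equal_sym _ _ Hs) (ex_intro _ _ Hx)) as [v Hv].
    assert (Huv : typed G' (pApp u v) (fsubst s1 A2))
      by (eapply ty_app; [apply (typed_weaken _ _ _ Hu), ctx_incl_fresh | exact Hv]).
    destruct (IH2 G' s1 s2 Hs (ex_intro _ _ Huv)) as [w Hw].
    exists (pLam (fresh G) w); apply ty_lam, Hw.
  - destruct HA as [u Hu].
    destruct (IH1 ((0, fsubst s1 A1) :: G) s1 s2 Hs) as [v Hv];
      [exists (pHyp 0); apply ty_hyp; reflexivity|].
    destruct (IH2 ((0, fsubst s1 A2) :: G) s1 s2 Hs) as [w Hw];
      [exists (pHyp 0); apply ty_hyp; reflexivity|].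
    exists (pCase u 0 (pInl v) 0 (pInr w)).
    eapply ty_case; [exact Hu | apply ty_inl, Hv | apply ty_inr, Hw].
  - destruct (IH (ctx_shift G) (up s1) (up s2) (provably_equal_up _ _ Hs)) as [v Hv];
      [apply provable_fAll_open, HA|].
    exists (pLamI v); apply ty_lamI, Hv.
  - destruct HA as [u Hu].
    destruct (IH ((0, fsubst (up s1) A) :: ctx_shift G) (up s1) (up s2)
                (provably_equal_up _ _ Hs)) as [v Hv];
      [exists (pHyp 0); apply ty_hyp; reflexivity|].
    exists (pExE u 0 (pExI (tVar 0) v)); apply (ty_exE _ _ _ _ _ _ Hu).
    unfold fshift; simpl; apply ty_exI; rewrite inst_var0_up_shift; exact Hv.
Qed.

(** * The slash *)

Lemma provable_nums_fsubst e s A :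
  provable [] (fsubst (nums e) (fsubst s A))
  <-> provable [] (fsubst (nums (fun i => teval e (s i))) A).
Proof.
  rewrite fsubst_comp; split; apply provable_fsubst_transport; intros i;
    [|apply provable_sym]; apply provable_nums_teval.
Qed.

Lemma fsubst_nums_fshift e n A : fsubst (nums (ncons n e)) (fshift A) = fsubst (nums e) A.
Proof. unfold fshift; rewrite fsubst_comp; reflexivity. Qed.

Lemma fsubst_nums_inst e n A : fsubst (nums e) (inst A (num n)) = fsubst (nums (ncons n e)) A.
Proof.
  unfold inst; rewrite fsubst_comp; f_equal.
  extensionality i; destruct i; simpl; [apply tsubst_num | reflexivity].
Qed.

Lemma fsubst_nums_inst_succ e n A :
  fsubst (nums (ncons n e)) (inst_succ A) = fsubst (nums (ncons (S n) e)) A.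
Proof.
  unfold inst_succ; rewrite fsubst_comp; f_equal.
  extensionality i; destruct i; reflexivity.
Qed.

Lemma inst_up_nums e n A : inst (fsubst (up (nums e)) A) (num n) = fsubst (nums (ncons n e)) A.
Proof.
  unfold inst; rewrite fsubst_comp; f_equal.
  extensionality i; destruct i; simpl; [reflexivity | apply tsubst_scons_tshift_var].
Qed.

Lemma feval_nums e e' A : feval e' (fsubst (nums e) A) <-> feval e A.
Proof.
  rewrite feval_fsubst; replace (fun i => teval e' (nums e i)) with e; [reflexivity|].
  extensionality i; symmetry; apply teval_num.
Qed.

(* [fsubst (nums e) A] is the closed instance of [A] under [e]. *)
Fixpoint slash (e : nat -> nat) (A : form) : Prop :=
  match A with
  | fAtom b s t => feval e (fAtom b s t)
  | fAnd A B => slash e A /\ slash e B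
  | fImp A B => provable [] (fsubst (nums e) A) -> slash e A -> slash e B
  | fOr A B => (provable [] (fsubst (nums e) A) /\ slash e A)
               \/ (provable [] (fsubst (nums e) B) /\ slash e B)
  | fAll A => forall n, slash (ncons n e) A
  | fEx A => exists n, provable [] (fsubst (nums (ncons n e)) A) /\ slash (ncons n e) A
  end.

Lemma slash_fsubst e s A : slash e (fsubst s A) <-> slash (fun i => teval e (s i)) A.
Proof.
  revert e s; induction A as [b x y| | | | |]; intros e s; simpl.
  - apply (feval_fsubst e s (fAtom b x y)).
  - rewrite IHA1, IHA2; reflexivity.
  - rewrite IHA1, IHA2, provable_nums_fsubst; reflexivity.
  - rewrite IHA1, IHA2, !provable_nums_fsubst; reflexivity.
  - setoid_rewrite IHA; setoid_rewrite teval_up; reflexivity.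
  - setoid_rewrite IHA; setoid_rewrite provable_nums_fsubst; setoid_rewrite teval_up;
      reflexivity.
Qed.

Lemma slash_inst e A m : slash e (inst A m) <-> slash (ncons (teval e m) e) A.
Proof. unfold inst; rewrite slash_fsubst, teval_scons; reflexivity. Qed.

Lemma slash_inst_succ e n A : slash (ncons n e) (inst_succ A) <-> slash (ncons (S n) e) A.
Proof. unfold inst_succ; rewrite slash_fsubst, teval_scons_succ; reflexivity. Qed.

Lemma slash_fshift e n A : slash (ncons n e) (fshift A) <-> slash e A.
Proof. unfold fshift; rewrite slash_fsubst; reflexivity. Qed.

Lemma slash_true_atomic e C : is_atomic C -> feval e C -> slash e C.
Proof. destruct C; simpl; tauto. Qed.

Lemma slash_true_fEx_atomic e C : is_atomic C -> feval e (fEx C) -> slash e (fEx C).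
Proof.
  intros HC [n Hn]; exists n; split; [|apply slash_true_atomic; assumption].
  destruct C; [apply provable_true_atom, Hn | contradiction ..].
Qed.

Definition ctx_slash (G : ctx) (e : nat -> nat) : Prop :=
  forall x B, lookup x G = Some B -> provable [] (fsubst (nums e) B) /\ slash e B.

Lemma ctx_slash_cons G e x A : ctx_slash G e ->
  provable [] (fsubst (nums e) A) -> slash e A -> ctx_slash ((x, A) :: G) e.
Proof. intros HG HA HsA y B; simpl; destruct (Nat.eqb y x); [intros [= <-] | apply HG]; auto. Qed.

Lemma ctx_slash_shift G e n : ctx_slash G e -> ctx_slash (ctx_shift G) (ncons n e).
Proof.
  intros HG x B; rewrite lookup_ctx_shift.
  destruct (lookup x G) eqn:E; simpl; [|discriminate]; intros [= <-].
  rewrite fsubst_nums_fshift, slash_fshift; eauto.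
Qed.

Lemma ctx_slash_true G e : ctx_slash G e -> ctx_true G e.
Proof.
  intros HG x B Hx; destruct (HG x B Hx) as [[u Hu] _].
  apply (feval_nums e e), (typed_sound _ _ _ Hu); discriminate.
Qed.

Lemma ctx_slash_provable G t A e : typed G t A -> ctx_slash G e ->
  provable [] (fsubst (nums e) A).
Proof. intros Ht HG; apply (provable_closed_instance _ _ _ _ Ht); apply HG. Qed.

Lemma slash_rec e A :
  provable [] (fsubst (nums e) (inst A tZero)) -> slash e (inst A tZero) ->
  provable [] (fsubst (nums e) (fAll (fImp A (inst_succ A)))) ->
  slash e (fAll (fImp A (inst_succ A))) ->
  forall n, provable [] (fsubst (nums (ncons n e)) A) /\ slash (ncons n e) A.
Proof.
  intros Hbase_prv Hbase [v Hv] Hstep n; induction n as [|n [[w Hw] IHn]].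
  - rewrite <- fsubst_nums_inst.
    split; [exact Hbase_prv | apply (slash_inst e A tZero), Hbase].
  - assert (Hvn : typed [] (pAppI v (num n))
                    (inst (fsubst (up (nums e)) (fImp A (inst_succ A))) (num n)))
      by (apply ty_appI, Hv).
    rewrite inst_up_nums in Hvn; simpl in Hvn; rewrite fsubst_nums_inst_succ in Hvn.
    split; [exists (pApp (pAppI v (num n)) w); eapply ty_app; eassumption|].
    apply slash_inst_succ, Hstep; [exists w|]; assumption.
Qed.

Lemma PostRule_atomic Ps C : PostRule Ps C -> is_atomic C.
Proof.
  destruct 1 as [|s t P HP| | | | | | |]; simpl; auto.
  destruct P; contradiction || exact I.
Qed.

Lemma slash_sound : forall G t A, typed G t A -> forall e, ctx_slash G e -> slash e A.
Proof.
  apply (typed_nested_ind (fun G t A => forall e, ctx_slash G e -> slash e A)).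
  - intros G x A Hx e HG; apply (HG x A Hx).
  - intros G u v A B _ IHu _ IHv e HG; split; auto.
  - intros G u A B _ IHu e HG; apply (proj1 (IHu e HG)).
  - intros G u A B _ IHu e HG; apply (proj2 (IHu e HG)).
  - intros G x u A B _ IHu e HG HA HsA; apply IHu, ctx_slash_cons; assumption.
  - intros G u v A B _ IHu Hv IHv e HG.
    apply (IHu e HG); [apply (ctx_slash_provable _ _ _ _ Hv HG) | apply IHv, HG].
  - intros G u A B Hu IHu e HG; left; split; [apply (ctx_slash_provable _ _ _ _ Hu HG) | auto].
  - intros G u A B Hu IHu e HG; right; split; [apply (ctx_slash_provable _ _ _ _ Hu HG) | auto].
  - intros G u x v y w A B C _ IHu _ IHv _ IHw e HG.
    destruct (IHu e HG) as [[HA HsA] | [HB HsB]];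
      [apply IHv | apply IHw]; apply ctx_slash_cons; assumption.
  - intros G u A _ IHu e HG n; apply IHu, ctx_slash_shift, HG.
  - intros G u m A _ IHu e HG; apply slash_inst, (IHu e HG).
  - intros G m u A Hu IHu e HG; exists (teval e m); split; [|apply slash_inst; auto].
    rewrite <- teval_scons, <- provable_nums_fsubst; apply (ctx_slash_provable _ _ _ _ Hu HG).
  - intros G u x v A C _ IHu _ IHv e HG.
    destruct (IHu e HG) as [n [HA HsA]]; apply (slash_fshift e n).
    apply IHv, ctx_slash_cons, HsA; [apply ctx_slash_shift, HG | exact HA].
  - intros G u v m A Hu IHu Hv IHv e HG; apply slash_inst.
    apply slash_rec; eauto using ctx_slash_provable.
  - intros G us Ps C HPs Hus _ e HG; apply slash_true_atomic; [eapply PostRule_atomic; eauto|].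
    apply (typed_sound _ _ _ (ty_post _ _ _ _ HPs Hus)), ctx_slash_true, HG.
  - intros G a Q HQ Ha e HG; apply (HG _ _ Ha).
  - intros G a Q HQ Ha e HG; apply (HG _ _ Ha).
  - intros G a u v Q C HQ HC Hu _ Hv _ e HG; apply slash_true_fEx_atomic; [assumption|].
    apply (typed_sound _ _ _ (ty_EM _ _ _ _ _ _ HQ HC Hu Hv)), ctx_slash_true, HG.
Qed.

Theorem mainTheorem4 (t : pt) (A B : form) :
  pt_closed t -> form_closed (fOr A B) -> typed nil t (fOr A B) ->
  (exists u : pt, typed nil u A) \/ (exists v : pt, typed nil v B).
Proof.
  intros _ [HA HB] Ht.
  assert (Hslash : slash (fun _ => 0) (fOr A B)) by (apply (slash_sound _ _ _ Ht); discriminate).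
  simpl in Hslash; rewrite !fsubst_closed in Hslash by assumption.
  destruct Hslash as [[HA' _] | [HB' _]]; [left | right]; assumption.
Qed.
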